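(* Consider the two-user scalar fading multiple access channel and the Stackelberg game described in the context. For every pair $(\mu_1,\mu_2)$ with $0\le\mu_1<\infty$, $0\le\mu_2<\infty$ and every $\epsilon>0$, an $\epsilon$-Stackelberg strategy exists.
   Context: Channel: $y=\sqrt{h_1}x_1+\sqrt{h_2}x_2+z$, noise variance $\sigma^2>0$; the fading $\mathbf h=(h_1,h_2)$ is stationary ergodic with a stationary distribution on $(0,\infty)^2$ having a continuous bounded density $f$; channel state is known everywhere. User $i$ has power budget $\bar P_i>0$ and feasible set $\mathcal F_i$ of measurable $\mathcal P_i\ge0$ with $E[\mathcal P_i(\mathbf h)]\le\bar P_i$. Stackelberg game: the base station (leader) announces a measurable set $D_1\subseteq(0,\infty)^2$; it then decodes user 1 first on $D_1$ and user 2 first on $D_1^c$. The users then play the low-level game with payoffs $\bar R_1(D_1,\mathcal P_1,\mathcal P_2)=\iint\tfrac12\log_2\Big(1+\frac{\mathcal P_1h_1}{\sigma^2+\mathcal P_2h_2I_{\{(h_1,h_2)\in D_1\}}}\Big)f\,dh_1dh_2$, $\bar R_2(D_1,\mathcal P_1,\mathcal P_2)=\iint\tfrac12\log_2\Big(1+\frac{\mathcal P_2h_2}{\sigma^2+\mathcal P_1h_1I_{\{(h_1,h_2)\in D_1^c\}}}\Big)f\,dh_1dh_2$. For each $D_1$ this low-level game has a unique admissible Nash equilibrium $(\mathcal P_{1D_1},\mathcal P_{2D_1})$ (a Nash equilibrium not Pareto-dominated in payoffs by another Nash equilibrium). The base station's payoff is $J(D_1)=\mu_1\bar R_1(D_1,\mathcal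 P_{1D_1},\mathcal P_{2D_1})+\mu_2\bar R_2(D_1,\mathcal P_{1D_1},\mathcal P_{2D_1})$. Let $R^*=\sup_{D_1}J(D_1)$. For $\epsilon>0$, a strategy $D_{1,\epsilon}^*$ is an $\epsilon$-Stackelberg strategy if $J(D_{1,\epsilon}^* )\ge R^*-\epsilon$. *)

From HB Require Import structures.
From mathcomp Require Import all_boot all_order all_algebra.
From mathcomp Require Import all_classical all_reals all_analysis.
Set Implicit Arguments. Unset Strict Implicit. Unset Printing Implicit Defensive.
Import Order.TTheory GRing.Theory Num.Theory.
Import numFieldNormedType.Exports.
Local Open Scope classical_set_scope.
Local Open Scope ring_scope.

Section MAC.
Variable R : realType.

Definition Hspace : set (R * R) := `]0, +oo[%classic `*` `]0, +oo[%classic.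

Definition leb2 := ((@lebesgue_measure R) \x (@lebesgue_measure R))%E.

Definition expect (f g : R * R -> R) : \bar R :=
  (\int[leb2]_(x in Hspace) (g x * f x)%:E)%E.

Definition half_log2_1p (x : R) : R := ln (1 + x) / (2 * ln 2).

Definition feasible (f : R * R -> R) (Pbar : R) (P : R * R -> R) : Prop :=
  measurable_fun Hspace P /\ (forall x, 0 <= P x) /\ (expect f P <= Pbar%:E)%E.

(* user 1 is decoded first on D1 (sees interference of user 2 there) *)
Definition rate1 (f : R * R -> R) (sigma2 : R) (D1 : set (R * R))
  (P1 P2 : R * R -> R) : \bar R :=
  expect f (fun x => half_log2_1p
    (P1 x * x.1 / (sigma2 + (if x \in D1 then P2 x * x.2 else 0)))).

(* user 2 is decoded first on the complement of D1 *)
Definition rate2 (f : R * R -> R) (sigma2 : R) (D1 : set (R * R))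
  (P1 P2 : R * R -> R) : \bar R :=
  expect f (fun x => half_log2_1p
    (P2 x * x.2 / (sigma2 + (if x \in ~` D1 then P1 x * x.1 else 0)))).

Definition nash (f : R * R -> R) (sigma2 Pbar1 Pbar2 : R) (D1 : set (R * R))
  (P1 P2 : R * R -> R) : Prop :=
  feasible f Pbar1 P1 /\ feasible f Pbar2 P2 /\
  (forall Q1, feasible f Pbar1 Q1 ->
     (rate1 f sigma2 D1 Q1 P2 <= rate1 f sigma2 D1 P1 P2)%E) /\
  (forall Q2, feasible f Pbar2 Q2 ->
     (rate2 f sigma2 D1 P1 Q2 <= rate2 f sigma2 D1 P1 P2)%E).

Definition admissible_nash (f : R * R -> R) (sigma2 Pbar1 Pbar2 : R)
  (D1 : set (R * R)) (P1 P2 : R * R -> R) : Prop :=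
  nash f sigma2 Pbar1 Pbar2 D1 P1 P2 /\
  ~ (exists Q1 Q2, nash f sigma2 Pbar1 Pbar2 D1 Q1 Q2 /\
       (rate1 f sigma2 D1 P1 P2 <= rate1 f sigma2 D1 Q1 Q2)%E /\
       (rate2 f sigma2 D1 P1 P2 <= rate2 f sigma2 D1 Q1 Q2)%E /\
       ((rate1 f sigma2 D1 P1 P2 < rate1 f sigma2 D1 Q1 Q2)%E \/
        (rate2 f sigma2 D1 P1 P2 < rate2 f sigma2 D1 Q1 Q2)%E)).

Definition leader_strategy (D1 : set (R * R)) : Prop :=
  measurable D1 /\ D1 `<=` Hspace.

Definition bs_payoff (f : R * R -> R) (sigma2 mu1 mu2 : R) (D1 : set (R * R))
  (P1 P2 : R * R -> R) : \bar R :=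
  (mu1%:E * rate1 f sigma2 D1 P1 P2 + mu2%:E * rate2 f sigma2 D1 P1 P2)%E.

Definition Rstar (f : R * R -> R) (sigma2 Pbar1 Pbar2 mu1 mu2 : R) : \bar R :=
  ereal_sup [set v | exists D1 P1 P2, leader_strategy D1 /\
     admissible_nash f sigma2 Pbar1 Pbar2 D1 P1 P2 /\
     v = bs_payoff f sigma2 mu1 mu2 D1 P1 P2].

Definition fading_density (f : R * R -> R) : Prop :=
  (forall x, 0 <= f x) /\ measurable_fun Hspace f /\
  {within Hspace, continuous f} /\ (exists M : R, forall x, `|f x| <= M) /\
  (\int[leb2]_(x in Hspace) (f x)%:E = 1)%E.

End MAC.

From HB Require Import structures.
From mathcomp Require Import all_boot all_order all_algebra.
From mathcomp Require Import all_classical all_reals all_analysis.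
From mathcomp Require Import measurable_realfun.
Import Order.TTheory GRing.Theory Num.Theory.
Local Open Scope classical_set_scope.
Local Open Scope ring_scope.

(* Removing interference can only increase a user's rate, so every leader
   payoff J(D1) is at most mu1 C1 + mu2 C2, where Ci is the best rate of user i
   alone under its power budget.  A user decoded last (user 1 for D1 = set0,
   user 2 for D1 = Hspace) sees no interference, so at any Nash equilibrium its
   rate is exactly Ci.  Hence if some Ci = +oo with mu_i > 0 that strategy has
   payoff +oo = R*; otherwise R* < +oo and any D1 whose payoff comes within eps
   of the supremum works, the payoff at the admissible equilibrium being unique. *)

Section half_log2_1p.
Variable R : realType.
Implicit Types x y a b : R.

Lemma half_log2_1p_ge0 x : 0 <= x -> 0 <= half_log2_1p x.
Proof.
move=> x0; rewrite /half_log2_1p divr_ge0 ?ln_ge0 ?lerDl //.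
by rewrite mulr_ge0 // ltW // ln_gt0 // ltr1n.
Qed.

Lemma ler_half_log2_1p x y : 0 <= x -> x <= y ->
  half_log2_1p x <= half_log2_1p y.
Proof.
move=> x0 xy; have y0 := le_trans x0 xy.
rewrite /half_log2_1p ler_pM2r ?invr_gt0 ?mulr_gt0 ?ln_gt0 ?ltr1n //.
by rewrite ler_ln ?posrE ?lerD2l // (lt_le_trans ltr01) // lerDl.
Qed.

Lemma half_log2_1p_div a b : 0 <= a -> 0 < b ->
  half_log2_1p (a / b) = (ln (b + a) - ln b) / (2 * ln 2).
Proof.
move=> a0 b0; rewrite /half_log2_1p; congr (_ / _).
have -> : 1 + a / b = (b + a) / b by rewrite mulrDl divff ?gt_eqF.
by rewrite lnM ?lnV ?posrE ?invr_gt0 // (lt_le_trans b0) // lerDl.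
Qed.

(* [ln (b + a) - ln b] avoids the measurability of the inverse [b^-1]. *)
Lemma measurable_half_log2_1p_div d (T : measurableType d) (D : set T)
    (a b : T -> R) :
  measurable_fun D a -> measurable_fun D b ->
  (forall t, D t -> 0 <= a t) -> (forall t, D t -> 0 < b t) ->
  measurable_fun D (fun t => half_log2_1p (a t / b t)).
Proof.
move=> ma mb a0 b0.
apply: (eq_measurable_fun (fun t => (ln (b t + a t) - ln (b t)) / (2 * ln 2))).
  by move=> t; rewrite inE => Dt; rewrite half_log2_1p_div ?a0 ?b0.
have mln (g : T -> R) : measurable_fun D g -> measurable_fun D (fun t => ln (g t)).
  by move=> mg; apply: measurableT_comp (@measurable_ln R) mg.
exact: measurable_funM (measurable_funB (mln _ (measurable_funD mb ma)) (mln _ mb))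
  (measurable_cst (2 * ln (2 : R))^-1 : measurable_fun D _).
Qed.

End half_log2_1p.

Section ereal_facts.
Context {R : realType}.

Lemma lte_EFin_mul_pinfty (a : R) (x : \bar R) :
  0 <= a -> (0 < a -> (x < +oo)%E) -> (a%:E * x < +oo)%E.
Proof.
rewrite le_eqVlt => /orP[/eqP <- _|a_gt0 x_lt]; first by rewrite mul0e ltry.
by rewrite lte_mul_pinfty ?lee_fin ?ltW ?x_lt.
Qed.

Lemma EFin_mul_pinftyD (a b : R) (y : \bar R) :
  0 < a -> 0 <= b -> (0 <= y)%E -> (a%:E * +oo + b%:E * y = +oo)%E.
Proof.
move=> a_gt0 b_ge0 y_ge0; rewrite mulry gtr0_sg // mul1e addye //.
by rewrite gt_eqF // (lt_le_trans (ltNyr 0)) // mule_ge0.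
Qed.

Lemma ereal_sup_adherent_le {S : set (\bar R)} {eps : R} :
  0 < eps -> (ereal_sup S < +oo)%E -> S !=set0 ->
  exists2 v, S v & (ereal_sup S - eps%:E <= v)%E.
Proof.
move=> eps_gt0 S_lt [w Sw].
have [S_fin|] := boolP (ereal_sup S \is a fin_num).
  by have [v Sv /ltW] := ub_ereal_sup_adherent eps_gt0 S_fin; exists v.
rewrite fin_numE negb_and !negbK (lt_eqF S_lt) orbF => /eqP ->.
by exists w; rewrite // addNye leNye.
Qed.

End ereal_facts.

Lemma measurable_Hspace (R : realType) : measurable (@Hspace R).
Proof. by apply: measurableX; apply: measurable_itv. Qed.

Lemma Hspace_gt0 {R : realType} {x : R * R} : Hspace x -> 0 < x.1 /\ 0 < x.2.
Proof. by case=> /=; rewrite !in_itv /= !andbT. Qed.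

Definition snr_rate {R : realType} (f : R * R -> R) (sigma2 : R)
    (D : set (R * R)) (a c : R * R -> R) : \bar R :=
  expect f (fun x => half_log2_1p (a x / (sigma2 + (if x \in D then c x else 0)))).

Definition capacity1 {R : realType} (f : R * R -> R) (sigma2 Pbar1 : R) : \bar R :=
  ereal_sup [set rate1 f sigma2 set0 Q (fun=> 0) | Q in feasible f Pbar1].

Definition capacity2 {R : realType} (f : R * R -> R) (sigma2 Pbar2 : R) : \bar R :=
  ereal_sup [set rate2 f sigma2 (@Hspace R) (fun=> 0) Q | Q in feasible f Pbar2].

Section rates.
Context {R : realType} {f : R * R -> R} {sigma2 : R}.
Local Notation Hspace := (@Hspace R).
Hypotheses (f_ge0 : forall x, 0 <= f x) (mf : measurable_fun Hspace f).
Hypothesis sigma2_gt0 : 0 < sigma2.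

Lemma expect_ge0 (g : R * R -> R) :
  (forall x, Hspace x -> 0 <= g x) -> (0 <= expect f g)%E.
Proof. by move=> g0; apply: integral_ge0 => x Hx; rewrite lee_fin mulr_ge0 ?g0. Qed.

Lemma le_expect (g h : R * R -> R) :
  measurable_fun Hspace g -> measurable_fun Hspace h ->
  (forall x, Hspace x -> 0 <= g x) -> (forall x, Hspace x -> g x <= h x) ->
  (expect f g <= expect f h)%E.
Proof.
move=> mg mh g0 gh; apply: ge0_le_integral; first exact: measurable_Hspace.
- by move=> x Hx; rewrite lee_fin mulr_ge0 ?g0.
- by apply/measurable_EFinP; apply: measurable_funM.
- by apply/measurable_EFinP; apply: measurable_funM.
- by move=> x Hx; rewrite lee_fin ler_wpM2r ?gh.
Qed.

Lemma rate1E D P1 P2 : rate1 f sigma2 D P1 P2 =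
  snr_rate f sigma2 D (fun x => P1 x * x.1) (fun x => P2 x * x.2).
Proof. by []. Qed.

Lemma rate2E D P1 P2 : rate2 f sigma2 D P1 P2 =
  snr_rate f sigma2 (~` D) (fun x => P2 x * x.2) (fun x => P1 x * x.1).
Proof. by []. Qed.

Section snr_rate.
Variables (a c : R * R -> R).
Hypotheses (a_ge0 : forall x, Hspace x -> 0 <= a x)
           (c_ge0 : forall x, Hspace x -> 0 <= c x).

Let noise_gt0 (D : set (R * R)) x :
  Hspace x -> 0 < sigma2 + (if x \in D then c x else 0).
Proof. by move=> Hx; rewrite ltr_wpDr //; case: ifP => // _; apply: c_ge0. Qed.

Let snr_ge0 (D : set (R * R)) x : Hspace x ->
  0 <= a x / (sigma2 + (if x \in D then c x else 0)).
Proof. by move=> Hx; rewrite divr_ge0 ?a_ge0 // ltW // noise_gt0. Qed.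

Lemma snr_rate_ge0 D : (0 <= snr_rate f sigma2 D a c)%E.
Proof. by apply: expect_ge0 => x Hx; apply/half_log2_1p_ge0/snr_ge0. Qed.

Lemma snr_rate_le_set0 D : measurable D ->
  measurable_fun Hspace a -> measurable_fun Hspace c ->
  (snr_rate f sigma2 D a c <= snr_rate f sigma2 set0 a c)%E.
Proof.
move=> mD ma mc.
have m_snr D' : measurable D' -> measurable_fun Hspace
    (fun x => half_log2_1p (a x / (sigma2 + (if x \in D' then c x else 0)))).
  move=> mD'; apply: measurable_half_log2_1p_div => //; last exact: noise_gt0.
  apply: measurable_funD; first exact: measurable_cst.
  apply: (eq_measurable_fun (fun x => \1_D' x * c x)).
    by move=> x _; rewrite indicE; case: (x \in D'); rewrite ?mul1r ?mul0r.
  by apply: measurable_funM => //; apply: measurable_funS (measurable_indic _ _).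
apply: le_expect; [exact: m_snr | exact: m_snr | |].
  by move=> x Hx; apply/half_log2_1p_ge0/snr_ge0.
move=> x Hx; apply: ler_half_log2_1p; first exact: snr_ge0.
rewrite ler_wpM2l ?a_ge0 // lef_pV2 ?posrE ?noise_gt0 //.
rewrite in_set0 addr0 lerDl; case: ifP => // _; exact: c_ge0.
Qed.

End snr_rate.

Lemma snr_rate_disjoint D a c c' : D `&` Hspace = set0 ->
  snr_rate f sigma2 D a c = snr_rate f sigma2 set0 a c'.
Proof.
move=> DH0; apply: eq_integral => x; rewrite inE => Hx.
rewrite !ifF ?in_set0 //; apply/negbTE/negP; rewrite inE => Dx.
by have : (D `&` Hspace) x by []; rewrite DH0.
Qed.

Lemma feasible_received1 {Pbar : R} {P : R * R -> R} : feasible f Pbar P ->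
  measurable_fun Hspace (fun x => P x * x.1) /\
  (forall x, Hspace x -> 0 <= P x * x.1).
Proof.
move=> [mP [P_ge0 _]]; split; last first.
  by move=> x /Hspace_gt0[h1 _]; rewrite mulr_ge0 // ltW.
apply: measurable_funM => //.
exact: measurable_funS _ (subsetT _) measurable_fst.
Qed.

Lemma feasible_received2 {Pbar : R} {P : R * R -> R} : feasible f Pbar P ->
  measurable_fun Hspace (fun x => P x * x.2) /\
  (forall x, Hspace x -> 0 <= P x * x.2).
Proof.
move=> [mP [P_ge0 _]]; split; last first.
  by move=> x /Hspace_gt0[_ h2]; rewrite mulr_ge0 // ltW.
apply: measurable_funM => //.
exact: measurable_funS _ (subsetT _) measurable_snd.
Qed.

Section feasible_profile.
Context {Pbar1 Pbar2 : R} {P1 P2 : R * R -> R}.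
Hypotheses (F1 : feasible f Pbar1 P1) (F2 : feasible f Pbar2 P2).

Lemma rate1_ge0 D : (0 <= rate1 f sigma2 D P1 P2)%E.
Proof.
have [_ a0] := feasible_received1 F1; have [_ c0] := feasible_received2 F2.
by rewrite rate1E; apply: snr_rate_ge0.
Qed.

Lemma rate2_ge0 D : (0 <= rate2 f sigma2 D P1 P2)%E.
Proof.
have [_ a0] := feasible_received2 F2; have [_ c0] := feasible_received1 F1.
by rewrite rate2E; apply: snr_rate_ge0.
Qed.

Lemma rate1_le_set0 D : measurable D ->
  (rate1 f sigma2 D P1 P2 <= rate1 f sigma2 set0 P1 P2)%E.
Proof.
have [ma a0] := feasible_received1 F1; have [mc c0] := feasible_received2 F2.
by move=> mD; rewrite !rate1E; apply: snr_rate_le_set0.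
Qed.

Lemma rate2_le_Hspace D : measurable D ->
  (rate2 f sigma2 D P1 P2 <= rate2 f sigma2 Hspace P1 P2)%E.
Proof.
have [ma a0] := feasible_received2 F2; have [mc c0] := feasible_received1 F1.
have HcH : ~` Hspace `&` Hspace = set0 by rewrite setICl.
move=> mD; rewrite !rate2E (@snr_rate_disjoint _ _ _ (fun x => P1 x * x.1) HcH).
by apply: snr_rate_le_set0 => //; exact: measurableC.
Qed.

End feasible_profile.

Lemma rate1_set0_indep P1 P2 P2' :
  rate1 f sigma2 set0 P1 P2 = rate1 f sigma2 set0 P1 P2'.
Proof. by rewrite !rate1E; apply: snr_rate_disjoint; rewrite set0I. Qed.

Lemma rate2_Hspace_indep P1 P1' P2 :
  rate2 f sigma2 Hspace P1 P2 = rate2 f sigma2 Hspace P1' P2.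
Proof.
have HcH : ~` Hspace `&` Hspace = set0 by rewrite setICl.
by rewrite !rate2E !(@snr_rate_disjoint _ _ _ (fun=> 0) HcH).
Qed.

Section game.
Context {Pbar1 Pbar2 : R}.

Lemma nash_rate1_set0 {P1 P2 : R * R -> R} :
  nash f sigma2 Pbar1 Pbar2 set0 P1 P2 ->
  rate1 f sigma2 set0 P1 P2 = capacity1 f sigma2 Pbar1.
Proof.
move=> [F1 [_ [best1 _]]]; apply/eqP; rewrite eq_le; apply/andP; split.
  by apply: ereal_sup_ubound; exists P1 => //; exact: rate1_set0_indep.
apply: ge_ereal_sup => _ [Q FQ <-].
by rewrite (rate1_set0_indep Q _ P2); exact: best1.
Qed.

Lemma nash_rate2_Hspace {P1 P2 : R * R -> R} :
  nash f sigma2 Pbar1 Pbar2 Hspace P1 P2 ->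
  rate2 f sigma2 Hspace P1 P2 = capacity2 f sigma2 Pbar2.
Proof.
move=> [_ [F2 [_ best2]]]; apply/eqP; rewrite eq_le; apply/andP; split.
  by apply: ereal_sup_ubound; exists P2 => //; exact: rate2_Hspace_indep.
apply: ge_ereal_sup => _ [Q FQ <-].
by rewrite (rate2_Hspace_indep _ P1 Q); exact: best2.
Qed.

Lemma Rstar_le_capacity {mu1 mu2 : R} : 0 <= mu1 -> 0 <= mu2 ->
  (Rstar f sigma2 Pbar1 Pbar2 mu1 mu2
     <= mu1%:E * capacity1 f sigma2 Pbar1 + mu2%:E * capacity2 f sigma2 Pbar2)%E.
Proof.
move=> mu1_ge0 mu2_ge0.
apply: ge_ereal_sup => _ [D [P1 [P2 [[mD _] [[[F1 [F2 _]] _] ->]]]]].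
apply: leeD; apply: lee_wpmul2l; rewrite ?lee_fin //.
  apply: le_trans (rate1_le_set0 F1 F2 _ mD) _.
  by apply: ereal_sup_ubound; exists P1 => //; exact: rate1_set0_indep.
apply: le_trans (rate2_le_Hspace F1 F2 _ mD) _.
by apply: ereal_sup_ubound; exists P2 => //; exact: rate2_Hspace_indep.
Qed.

Lemma nash_set0_bs_payoff {mu1 mu2 : R} {P1 P2 : R * R -> R} :
  0 < mu1 -> 0 <= mu2 -> capacity1 f sigma2 Pbar1 = +oo%E ->
  nash f sigma2 Pbar1 Pbar2 set0 P1 P2 ->
  bs_payoff f sigma2 mu1 mu2 set0 P1 P2 = +oo%E.
Proof.
move=> mu1_gt0 mu2_ge0 C1_oo NE; have [F1 [F2 _]] := NE.
rewrite /bs_payoff (nash_rate1_set0 NE) C1_oo EFin_mul_pinftyD //.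
exact: rate2_ge0 F1 F2 _.
Qed.

Lemma nash_Hspace_bs_payoff {mu1 mu2 : R} {P1 P2 : R * R -> R} :
  0 <= mu1 -> 0 < mu2 -> capacity2 f sigma2 Pbar2 = +oo%E ->
  nash f sigma2 Pbar1 Pbar2 Hspace P1 P2 ->
  bs_payoff f sigma2 mu1 mu2 Hspace P1 P2 = +oo%E.
Proof.
move=> mu1_ge0 mu2_gt0 C2_oo NE; have [F1 [F2 _]] := NE.
rewrite /bs_payoff (nash_rate2_Hspace NE) C2_oo addeC EFin_mul_pinftyD //.
exact: rate1_ge0 F1 F2 _.
Qed.

Lemma Rstar_lt_pinfty {mu1 mu2 : R} : 0 <= mu1 -> 0 <= mu2 ->
  (0 < mu1 -> (capacity1 f sigma2 Pbar1 < +oo)%E) ->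
  (0 < mu2 -> (capacity2 f sigma2 Pbar2 < +oo)%E) ->
  (Rstar f sigma2 Pbar1 Pbar2 mu1 mu2 < +oo)%E.
Proof.
move=> mu1_ge0 mu2_ge0 C1_lt C2_lt.
apply: le_lt_trans (Rstar_le_capacity mu1_ge0 mu2_ge0) _.
by apply: lte_add_pinfty; apply: lte_EFin_mul_pinfty.
Qed.

End game.

End rates.

Theorem corollary1 (R : realType) (f : R * R -> R) (sigma2 Pbar1 Pbar2 : R)
  (Hf : fading_density f) (Hsigma : 0 < sigma2)
  (HP1 : 0 < Pbar1) (HP2 : 0 < Pbar2)
  (* standing fact of the context: for each D1 the low-level game has a
     unique admissible Nash equilibrium (so J(D1) is well defined) *)
  (Hex : forall D1, leader_strategy D1 ->
     exists P1 P2, admissible_nash f sigma2 Pbar1 Pbar2 D1 P1 P2)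
  (Huniq : forall D1 P1 P2 Q1 Q2, leader_strategy D1 ->
     admissible_nash f sigma2 Pbar1 Pbar2 D1 P1 P2 ->
     admissible_nash f sigma2 Pbar1 Pbar2 D1 Q1 Q2 ->
     rate1 f sigma2 D1 P1 P2 = rate1 f sigma2 D1 Q1 Q2 /\
     rate2 f sigma2 D1 P1 P2 = rate2 f sigma2 D1 Q1 Q2)
  (mu1 mu2 : R) (Hmu1 : 0 <= mu1) (Hmu2 : 0 <= mu2)
  (eps : R) (Heps : 0 < eps) :
  exists D1, leader_strategy D1 /\
    forall P1 P2, admissible_nash f sigma2 Pbar1 Pbar2 D1 P1 P2 ->
      (Rstar f sigma2 Pbar1 Pbar2 mu1 mu2 - eps%:E
         <= bs_payoff f sigma2 mu1 mu2 D1 P1 P2)%E.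
Proof.
have [f_ge0 [mf _]] := Hf.
have ls_set0 : leader_strategy (@set0 (R * R)).
  by split; [exact: measurable0 | exact: sub0set].
have [/andP[mu1_gt0 /eqP C1_oo]|C1_fin] :=
  boolP ((0 < mu1) && (capacity1 f sigma2 Pbar1 == +oo%E)).
  exists set0; split=> // P1 P2 [NE _].
  by rewrite (nash_set0_bs_payoff f_ge0 Hsigma mu1_gt0 Hmu2 C1_oo NE) leey.
have [/andP[mu2_gt0 /eqP C2_oo]|C2_fin] :=
  boolP ((0 < mu2) && (capacity2 f sigma2 Pbar2 == +oo%E)).
  exists (@Hspace R); split=> [|P1 P2 [NE _]].
    by split; [exact: measurable_Hspace | exact: subset_refl].
  by rewrite (nash_Hspace_bs_payoff f_ge0 Hsigma Hmu1 mu2_gt0 C2_oo NE) leey.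
have Rstar_fin : (Rstar f sigma2 Pbar1 Pbar2 mu1 mu2 < +oo)%E.
  apply: (Rstar_lt_pinfty f_ge0 mf Hsigma Hmu1 Hmu2) => mu_gt0; rewrite ltey.
    by apply: contraNneq C1_fin => ->; rewrite mu_gt0.
  by apply: contraNneq C2_fin => ->; rewrite mu_gt0.
have [P1 [P2 AN]] := Hex set0 ls_set0.
have [|_ [D1 [Q1 [Q2 [LS [AQ ->]]]]] le_payoff] :=
    ereal_sup_adherent_le Heps Rstar_fin.
  by exists (bs_payoff f sigma2 mu1 mu2 set0 P1 P2), set0, P1, P2.
exists D1; split=> // P1' P2' AP.
have [rate1_eq rate2_eq] := Huniq _ _ _ _ _ LS AQ AP.
by rewrite /bs_payoff -rate1_eq -rate2_eq.
Qed.
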